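(* Let $A\in\mathbb{R}^{n\times n}$ be symmetric positive definite, $M_0\in\mathbb{R}^{n\times n}$, and let $(M_i,R_i,G_i,P_i)$ be the NCG sequence defined in the context (assumed not to break down). Then for $i=1,2,\dots$, $$M_i\in M_0+\mathcal{K}_i(A^2,G_0)\quad\text{and}\quad R_i=I_n-AM_i\perp\mathcal{K}_i(A^2,G_0),$$ where $\mathcal{K}_i(A^2,G_0)=\mathrm{span}\{G_0,A^2G_0,\dots,A^{2(i-1)}G_0\}$ and $G_0=-AR_0$. Moreover, the search directions $P_0,\dots,P_{i-1}$ form an $A$-orthogonal basis (i.e. $(P_j,AP_k)_F=0$ for $j\neq k$) of this Krylov subspace, and $$\mathrm{span}\{P_0,\dots,P_{i-1}\}=\mathrm{span}\{G_0,\dots,G_{i-1}\}=\mathcal{K}_i(A^2,G_0).$$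
   Context: The Frobenius inner product on $\mathbb{R}^{n\times n}$ is $(X,Y)_F=\operatorname{tr}(X^TY)$; orthogonality $\perp$ is with respect to it. The NCG method: given $M_0$, set $R_i:=I_n-AM_i$ and $G_i:=-AR_i$, $P_0:=-G_0$. For $i\ge1$, $P_i$ is the element of $-G_i+\mathrm{span}\{P_{i-1}\}$ with $(P_i,AP_{i-1})_F=0$. For $i\ge0$, $M_{i+1}$ is the element of $M_i+\mathrm{span}\{P_i\}$ such that $(I_n-AM_{i+1},P_i)_F=0$. It is assumed that the iteration does not break down ($R_i\neq0$, $P_i\neq0$ for all indices considered), so that the iterates are uniquely determined. *)

From HB Require Import structures.
From mathcomp Require Import all_boot all_order all_algebra.
Set Implicit Arguments. Unset Strict Implicit. Unset Printing Implicit Defensive.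
Import Order.TTheory GRing.Theory Num.Theory.
Local Open Scope ring_scope.

Section NCG.
Variables (R : realFieldType) (n : nat).

Definition frob (X Y : 'M[R]_n) : R := \tr (X^T *m Y).

Definition spd (A : 'M[R]_n) : Prop :=
  A^T = A /\ forall x : 'cV[R]_n, x != 0 -> 0 < (x^T *m A *m x) 0 0.

Definition resid (A M : 'M[R]_n) : 'M[R]_n := 1%:M - A *m M.
Definition grad (A M : 'M[R]_n) : 'M[R]_n := - (A *m resid A M).

Definition is_NCG (A : 'M[R]_n) (M P : nat -> 'M[R]_n) : Prop :=
  [/\ P 0%N = - grad A (M 0%N),
      (forall i, exists beta : R,
          P i.+1 = - grad A (M i.+1) + beta *: P i
          /\ frob (P i.+1) (A *m P i) = 0)
    & (forall i, exists alpha : R,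
          M i.+1 = M i + alpha *: P i
          /\ frob (resid A (M i.+1)) (P i) = 0)].

Definition krylov (i : nat) (B G : 'M[R]_n) : {vspace 'M[R]_n} :=
  <<[seq B ^+ k *m G | k <- iota 0 i]>>%VS.

End NCG.

From HB Require Import structures.
From mathcomp Require Import all_boot all_order all_algebra.
Import Order.TTheory GRing.Theory Num.Theory.
Local Open Scope ring_scope.

(* Since G_k = G_0 + A^2 (M_k - M_0), an induction on the recurrences puts
   M_k - M_0 in K_k and P_k in K_(k+1).  The residual update
   R_(k+1) = R_k - alpha A P_k and the A-orthogonality of P_0, ..., P_k keep
   R_(k+1) orthogonal to P_0, ..., P_k, hence to their span K_(k+1).  As
   (P_(k+1), A P_j) = (R_(k+1), A^2 P_j) + beta (P_k, A P_j) with A^2 P_j in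
   K_(k+1) for j < k, this in turn makes P_(k+1) A-orthogonal to all earlier
   directions.  Positive definiteness turns nonzero A-orthogonal directions
   into a free family, and a dimension count gives span P = K. *)

Set Implicit Arguments.
Unset Strict Implicit.
Unset Printing Implicit Defensive.

Section SpanUpto.
Variables (K : fieldType) (vT : vectType K).
Implicit Types (f : nat -> vT) (U : {vspace vT}).

Definition span_upto f k : {vspace vT} := <<[seq f j | j <- iota 0 k]>>%VS.

Lemma memv_span_upto f k j : (j < k)%N -> (f j \in span_upto f k)%VS.
Proof. by move=> ltjk; apply/memv_span/map_f; rewrite mem_iota. Qed.

Lemma span_uptoP f k U :
  reflect (forall j, (j < k)%N -> (f j \in U)%VS) (span_upto f k <= U)%VS.
Proof.
apply: (iffP span_subvP) => [sfU j ltjk | fU _ /mapP[j + ->]].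
  by apply/sfU/map_f; rewrite mem_iota.
by rewrite mem_iota add0n => /andP[_]; apply: fU.
Qed.

Lemma span_upto_mono f k k' :
  (k <= k')%N -> (span_upto f k <= span_upto f k')%VS.
Proof.
by move=> lekk'; apply/span_uptoP => j ltjk; apply: memv_span_upto (leq_trans ltjk _).
Qed.

Lemma dim_span_upto f k : (\dim (span_upto f k) <= k)%N.
Proof. by have := dim_span [seq f j | j <- iota 0 k]; rewrite size_map size_iota. Qed.

End SpanUpto.

Section Frobenius.
Variables (R : realFieldType) (n : nat).
Implicit Types (A X Y Z : 'M[R]_n).

Lemma frobC X Y : frob X Y = frob Y X.
Proof. by rewrite /frob -mxtrace_tr trmx_mul trmxK. Qed.

Lemma frobDl X Y Z : frob (X + Y) Z = frob X Z + frob Y Z.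
Proof. by rewrite /frob linearD mulmxDl mxtraceD. Qed.

Lemma frobNl X Y : frob (- X) Y = - frob X Y.
Proof. by rewrite /frob linearN mulNmx raddfN. Qed.

Lemma frobBl X Y Z : frob (X - Y) Z = frob X Z - frob Y Z.
Proof. by rewrite frobDl frobNl. Qed.

Lemma frobZl a X Y : frob (a *: X) Y = a * frob X Y.
Proof. by rewrite /frob linearZ -scalemxAl mxtraceZ. Qed.

Lemma frob_sumr X m (c : 'I_m -> R) (F : 'I_m -> 'M[R]_n) :
  frob X (\sum_i c i *: F i) = \sum_i c i * frob X (F i).
Proof.
rewrite /frob mulmx_sumr raddf_sum; apply: eq_bigr => i _.
by rewrite -scalemxAr; apply: mxtraceZ.
Qed.

Lemma frob_span_upto_eq0 Y (f : nat -> 'M[R]_n) k X :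
  (forall j, (j < k)%N -> frob Y (f j) = 0) -> (X \in span_upto f k)%VS ->
  frob Y X = 0.
Proof.
move=> Yf0 /(@coord_span _ _ _ (in_tuple _)) ->; rewrite frob_sumr big1 // => i _.
have ltik : (i < k)%N by rewrite (leq_trans (ltn_ord i)) // size_map size_iota.
by rewrite (nth_map 0%N) ?size_iota // nth_iota // Yf0 ?mulr0.
Qed.

Lemma frob_sym_mulmxl A X Y : A^T = A -> frob (A *m X) Y = frob X (A *m Y).
Proof. by move=> symA; rewrite /frob trmx_mul symA mulmxA. Qed.

Lemma frob_sym_mulmxC A X Y : A^T = A -> frob X (A *m Y) = frob Y (A *m X).
Proof. by move=> symA; rewrite frobC frob_sym_mulmxl. Qed.

Lemma spd_frob_gt0 A X : spd A -> X != 0 -> 0 < frob X (A *m X).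
Proof.
move=> [_ posA] nzX.
have frob_col i : (X^T *m (A *m X)) i i = ((col i X)^T *m A *m col i X) 0 0.
  rewrite mulmxA !mxE; apply: eq_bigr => j _; rewrite !mxE.
  by congr (_ * _); apply: eq_bigr => k _; rewrite !mxE.
have quad_ge0 (x : 'cV[R]_n) : 0 <= (x^T *m A *m x) 0 0.
  by have [->|/posA/ltW//] := eqVneq x 0; rewrite mulmx0 mxE.
have [i nzXi] : exists i, col i X != 0.
  apply/existsP; apply: contraR nzX => /existsPn allX0.
  by apply/eqP/matrixP => a b; have /negPn/eqP/matrixP/(_ a 0) := allX0 b; rewrite !mxE.
rewrite /frob /mxtrace (bigD1 i) //= frob_col ltr_pwDl ?posA //.
by apply: sumr_ge0 => j _; rewrite frob_col.
Qed.

Definition A_orthogonal A (f : nat -> 'M[R]_n) k :=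
  forall j l, (j < k)%N -> (l < k)%N -> j != l -> frob (f j) (A *m f l) = 0.

Lemma A_orthogonal_free A (f : nat -> 'M[R]_n) k :
  spd A -> (forall j, (j < k)%N -> f j != 0) -> A_orthogonal A f k ->
  free [seq f j | j <- iota 0 k].
Proof.
move=> spdA nzf oAf; set s := [seq f j | j <- iota 0 k].
have size_s : size s = k by rewrite size_map size_iota.
have nth_s l : (l < k)%N -> s`_l = f l.
  by move=> ltlk; rewrite (nth_map 0%N) ?size_iota // nth_iota.
apply/(@freeP _ _ _ (in_tuple s)) => c sum_c0 i.
have ltik : (i < k)%N by rewrite -size_s ltn_ord.
have : frob s`_i (A *m \sum_j c j *: s`_j) = 0.
  by rewrite sum_c0 mulmx0 /frob mulmx0 mxtrace0.
rewrite mulmx_sumr; under eq_bigr do rewrite -scalemxAr.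
rewrite frob_sumr (bigD1 i) //= big1 ?addr0 => [|j neji]; last first.
  by rewrite !nth_s ?oAf ?mulr0 // 1?eq_sym // -size_s ltn_ord.
move/eqP; rewrite mulf_eq0 nth_s // => /orP[/eqP // | /eqP fAf0].
by have := spd_frob_gt0 spdA (nzf _ ltik); rewrite fAf0 ltxx.
Qed.

End Frobenius.

Section Krylov.
Variables (R : realFieldType) (n : nat) (B G : 'M[R]_n).

Lemma krylov_mono k k' : (k <= k')%N -> (krylov k B G <= krylov k' B G)%VS.
Proof. exact: span_upto_mono. Qed.

Lemma memv_krylov_seed k : (G \in krylov k.+1 B G)%VS.
Proof.
by have := @memv_span_upto _ _ (fun j => B ^+ j *m G) k.+1 0 isT; rewrite mul1mx.
Qed.

Lemma memv_krylov_mulmx k X :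
  (X \in krylov k B G)%VS -> (B *m X \in krylov k.+1 B G)%VS.
Proof.
move=> /(memv_img (linfun (mulmx B))); rewrite lfunE limg_span.
apply/subvP/span_subvP => _ /mapP[_ /mapP[j ltjk ->] ->].
rewrite lfunE /=.
have -> : B *m (B ^+ j *m G) = B ^+ j.+1 *m G by rewrite mulmxA exprS mulmxE.
apply: (@memv_span_upto _ _ (fun j => B ^+ j *m G)); by move: ltjk; rewrite mem_iota.
Qed.

End Krylov.

Lemma grad_shift (R : realFieldType) (n : nat) (A M M' : 'M[R]_n) :
  grad A M' = grad A M + (A *m A) *m (M' - M).
Proof.
rewrite /grad /resid !mulmxBr !mulmx1 !mulmxA !opprB.
by rewrite [RHS]addrC addrA subrK.
Qed.

Lemma resid_step (R : realFieldType) (n : nat) (A M P : 'M[R]_n) a :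
  resid A (M + a *: P) = resid A M - a *: (A *m P).
Proof. by rewrite /resid mulmxDr -scalemxAr opprD addrA. Qed.

Section NCG.
Variables (R : realFieldType) (n : nat) (A : 'M[R]_n) (M P : nat -> 'M[R]_n).
Hypothesis spdA : spd A.
Hypothesis ncg : is_NCG A M P.

Local Notation G j := (grad A (M j)).
Local Notation K k := (krylov k (A *m A) (G 0%N)).

Definition resid_orth k := forall j, (j < k)%N -> frob (resid A (M k)) (P j) = 0.

Lemma NCG_krylov k : (M k - M 0%N \in K k)%VS /\ (P k \in K k.+1)%VS.
Proof.
have [P0 dirS iterS] := ncg.
elim: k => [|k [MK PK]].
  by rewrite subrr mem0v P0 memvN memv_krylov_seed.
have MK' : (M k.+1 - M 0%N \in K k.+1)%VS.
  have [a [-> _]] := iterS k.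
  by rewrite addrAC memvD ?memvZ // (subvP (krylov_mono _ _ (leqnSn k))).
split=> //; have [b [-> _]] := dirS k.
rewrite memvD ?memvZ ?(subvP (krylov_mono _ _ (leqnSn k.+1)) _ PK) //.
by rewrite memvN (grad_shift _ (M 0%N)) memvD ?memv_krylov_seed ?memv_krylov_mulmx.
Qed.

Lemma dir_span_grads k : (P k \in span_upto (fun j => G j) k.+1)%VS.
Proof.
have [P0 dirS _] := ncg.
elim: k => [|k IHk]; first by rewrite P0 memvN (@memv_span_upto _ _ (fun j => G j)).
have [b [-> _]] := dirS k.
apply: memvD; first by rewrite memvN (@memv_span_upto _ _ (fun j => G j)).
exact/memvZ/(subvP (span_upto_mono _ (leqnSn k.+1))).
Qed.

Lemma grad_span_dirs k : (G k \in span_upto P k.+1)%VS.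
Proof.
have [P0 dirS _] := ncg.
case: k => [|k]; first by rewrite -[G 0%N]opprK -P0 memvN memv_span_upto.
have [b [defP _]] := dirS k.
have -> : G k.+1 = b *: P k - P k.+1 by rewrite defP opprD opprK addrC subrK.
by rewrite memvB ?memvZ ?memv_span_upto.
Qed.

Lemma span_grads_dirs k : span_upto (fun j => G j) k = span_upto P k.
Proof.
apply/eqP; rewrite eqEsubv; apply/andP; split; apply/span_uptoP => j ltjk.
  exact: subvP (span_upto_mono P ltjk) _ (grad_span_dirs j).
exact: subvP (span_upto_mono (fun j => G j) ltjk) _ (dir_span_grads j).
Qed.

Lemma span_dirs_krylov k : (forall j, (j < k)%N -> P j != 0) ->
  A_orthogonal A P k -> span_upto P k = K k.
Proof.
move=> nzP oAP; apply/eqP; rewrite eqEdim; apply/andP; split.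
  apply/span_uptoP => j ltjk.
  by apply: (subvP (krylov_mono _ _ ltjk)); have [] := NCG_krylov j.
by have /eqnP -> := A_orthogonal_free spdA nzP oAP; rewrite size_map size_iota dim_span_upto.
Qed.

Lemma resid_orth_step k :
  resid_orth k -> A_orthogonal A P k.+1 -> resid_orth k.+1.
Proof.
move=> oR oAP j; have [_ _ iterS] := ncg; have [a [defM oRP]] := iterS k.
rewrite ltnS leq_eqVlt => /predU1P[-> // | ltjk].
rewrite defM resid_step frobBl frobZl frob_sym_mulmxl ?spdA.1 //.
by rewrite oR // oAP ?mulr0 ?subrr ?(gtn_eqF ltjk) // ltnS ltnW.
Qed.

Lemma A_orthogonal_step k : (forall j, (j < k.+1)%N -> P j != 0) ->
  A_orthogonal A P k.+1 -> resid_orth k.+1 -> A_orthogonal A P k.+2.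
Proof.
move=> nzP oAP oR; have [_ dirS _] := ncg; have [b [defP oPP]] := dirS k.
have oR_K X : (X \in K k.+1)%VS -> frob (resid A (M k.+1)) X = 0.
  by rewrite -span_dirs_krylov //; apply: frob_span_upto_eq0.
have oPnew j : (j <= k)%N -> frob (P k.+1) (A *m P j) = 0.
  rewrite leq_eqVlt => /predU1P[-> // | ltjk].
  rewrite defP frobDl frobZl /grad !frobNl opprK frob_sym_mulmxl ?spdA.1 // mulmxA.
  rewrite oAP ?(gtn_eqF ltjk) ?mulr0 ?addr0 ?ltnS ?(ltnW ltjk) //.
  have AAPj : (A *m A *m P j \in K j.+2)%VS.
    by apply: memv_krylov_mulmx; have [] := NCG_krylov j.
  exact/oR_K/(subvP (krylov_mono _ _ (ltjk : (j.+2 <= k.+1)%N)) _ AAPj).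
move=> j l; rewrite ltnS leq_eqVlt => /predU1P[-> | ltj].
  rewrite ltnS leq_eqVlt => /predU1P[-> | ltl]; first by rewrite eqxx.
  by move=> _; apply: oPnew.
rewrite ltnS leq_eqVlt => /predU1P[-> _ | ltl]; last exact: oAP.
by rewrite frob_sym_mulmxC ?spdA.1 //; apply: oPnew.
Qed.

Lemma NCG_orthogonality k : (forall j, (j < k)%N -> P j != 0) ->
  resid_orth k /\ A_orthogonal A P k.+1.
Proof.
elim: k => [_ | k IHk nzP].
  by split=> // j l; rewrite !ltnS !leqn0 => /eqP-> /eqP->; rewrite eqxx.
have [oR oAP] := IHk (fun j ltjk => nzP j (ltnW ltjk)).
have oR' := resid_orth_step oR oAP.
by split; last exact: A_orthogonal_step nzP oAP oR'.
Qed.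

End NCG.

Theorem proposition2 (R : realFieldType) (n : nat) (A : 'M[R]_n)
    (M P : nat -> 'M[R]_n) :
  spd A -> is_NCG A M P ->
  forall i : nat, (0 < i)%N ->
  (* no breakdown at the indices considered *)
  (forall j : nat, (j < i)%N -> resid A (M j) != 0 /\ P j != 0) ->
  let K := krylov i (A *m A) (grad A (M 0%N)) in
  [/\ (M i - M 0%N \in K)%VS,
      (forall X : 'M[R]_n, (X \in K)%VS -> frob (resid A (M i)) X = 0),
      (forall j k : nat, (j < i)%N -> (k < i)%N -> j != k ->
          frob (P j) (A *m P k) = 0),
      basis_of K [seq P j | j <- iota 0 i]
    & (<<[seq P j | j <- iota 0 i]>>%VS = K
       /\ <<[seq grad A (M j) | j <- iota 0 i]>>%VS = K)].
Proof.
move=> spdA ncg i _ nobreak K.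
have nzP j : (j < i)%N -> P j != 0 by case/nobreak.
have [oR oAP] := NCG_orthogonality spdA ncg nzP.
have oAPi : A_orthogonal A P i.
  by move=> j k ltji ltki; apply: oAP; rewrite ltnS ltnW.
have spanP : span_upto P i = K := span_dirs_krylov spdA ncg nzP oAPi.
split=> //.
- by have [] := NCG_krylov ncg i.
- by move=> X; rewrite -spanP; apply: frob_span_upto_eq0.
- by rewrite /basis_of -/(span_upto P i) spanP eqxx (A_orthogonal_free spdA nzP).
- by rewrite -/(span_upto P i) -/(span_upto (fun j => grad A (M j)) i) (span_grads_dirs ncg).
Qed.
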